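(* The enhanced power graph of the abelian group $\mathbf C_{30}\times\mathbf C_{30}$ is not perfect; more precisely, if $a_1,a_2$ are elements of order $2$, $b_1,b_2$ elements of order $3$, and $c_1,c_2$ elements of order $5$ with $\langle a_1,a_2\rangle$, $\langle b_1,b_2\rangle$, $\langle c_1,c_2\rangle$ non-cyclic, then the vertices $a_1b_1,\ b_1c_2,\ a_2,\ b_2,\ a_1c_1$ induce a $5$-cycle in $\mathcal G_e(\mathbf C_{30}\times\mathbf C_{30})$.
   Context: $\mathbf C_{30}$ is the cyclic group of order $30$. The enhanced power graph $\mathcal G_e(\mathbf G)$ has vertex set $G$, distinct $x,y$ adjacent iff $\langle x,y\rangle$ is cyclic. A graph is perfect if every induced subgraph has chromatic number equal to its clique number. *)

From mathcomp Require Import all_boot all_fingroup all_solvable all_algebra.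
Set Implicit Arguments. Unset Strict Implicit. Unset Printing Implicit Defensive.

(* Simple graphs on a finite type T, given by an adjacency relation e
   (assumed symmetric and irreflexive in the uses below). *)
Section Graphs.
Variables (T : finType) (e : rel T).

Definition is_clique (K : {set T}) : bool :=
  [forall x in K, forall y in K, (x != y) ==> e x y].

Definition clique_number (S : {set T}) : nat :=
  \max_(K : {set T} | (K \subset S) && is_clique K) #|K|.

Definition colorable (S : {set T}) (k : nat) : bool :=
  [exists f : {ffun T -> 'I_k},
     [forall x in S, forall y in S, e x y ==> (f x != f y)]].

(* chromatic number of the induced subgraph on S: least k <= #|S| such that
   S is k-colourable (#|S| colours always suffice). *)
Definition chromatic_number (S : {set T}) : nat :=
  \big[minn/#|S|]_(k < #|S|.+1 | colorable S k) k.

Definition perfect : Prop :=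
  forall S : {set T}, chromatic_number S = clique_number S.

Definition induces_C5 (v0 v1 v2 v3 v4 : T) : bool :=
  [&& uniq [:: v0; v1; v2; v3; v4],
      e v0 v1, e v1 v2, e v2 v3, e v3 v4, e v4 v0,
      ~~ e v0 v2, ~~ e v0 v3, ~~ e v1 v3, ~~ e v1 v4 & ~~ e v2 v4].

End Graphs.

Definition ep_adj (gT : finGroupType) : rel gT :=
  fun x y => (x != y) && cyclic <<[set x; y]>>%g.

(* C_30 x C_30, with 'Z_30 viewed as an (additive) finite group. *)
Definition C30xC30 : finGroupType := ('Z_30 * 'Z_30)%type.

From mathcomp Require Import all_boot all_fingroup all_solvable all_algebra.
Set Implicit Arguments. Unset Strict Implicit. Unset Printing Implicit Defensive.

(* Graph side: a 5-cycle induced on vertices S needs three colours (an odd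
   cycle is not 2-colourable) while its cliques have at most two vertices, so
   chromatic_number S <> clique_number S and the graph is not perfect.

   Group side (in any abelian group): if x and y have coprime orders then
   <[x * y]> contains both x and y.  Hence the five vertices
   a1b1, b1c2, a2, b2, a1c1 are consecutively adjacent, each consecutive pair
   lying in a cyclic group such as <[a1 b1 c2]>; and each non-consecutive pair
   generates a group containing one of the non-cyclic pairs {a1,a2}, {b1,b2},
   {c1,c2}, so it is not cyclic.  Distinctness of the five vertices follows
   from their orders 6, 15, 2, 3, 10.

   Finally C_30 x C_30 is abelian and contains suitable a_i, b_i, c_i (the
   elements of order 2, 3, 5 on the two axes), which yields the theorem. *)

Section InducedPentagon.
Variables (T : finType) (e : rel T).

Lemma chromatic_number_lb (S : {set T}) (m : nat) :
  m <= #|S| -> (forall k, colorable e S k -> m <= k) ->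
  m <= chromatic_number e S.
Proof.
move=> mS mk; apply: (big_ind (fun n => m <= n)) => // [x y mx my|k /mk //].
by rewrite leq_min mx my.
Qed.

Lemma clique_number_ub (S : {set T}) (m : nat) :
  (forall K : {set T}, K \subset S -> is_clique e K -> #|K| <= m) ->
  clique_number e S <= m.
Proof.
move=> Km; apply: (big_ind (fun n => n <= m)) => // [x y xm ym|K].
  by rewrite geq_max xm ym.
by case/andP; apply: Km.
Qed.

(* Two colours do not suffice for a 5-cycle, since it has odd length. *)
Lemma pentagon_not_2colourable (a b c d g : nat) :
  a < 2 -> b < 2 -> c < 2 -> d < 2 -> g < 2 ->
  [&& a != b, b != c, c != d, d != g & g != a] = false.
Proof. by case: a b c d g => [|[|a]] [|[|b]] [|[|c]] [|[|d]] [|[|g]]. Qed.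

Variables v0 v1 v2 v3 v4 : T.
Hypothesis pentagon : induces_C5 e v0 v1 v2 v3 v4.

Let s := [:: v0; v1; v2; v3; v4].
Let S := [set x in s].

Let uniq_s : uniq s. Proof. by case/andP: pentagon. Qed.

Lemma pentagon_chromatic : 3 <= chromatic_number e S.
Proof.
case/and5P: pentagon => _ e01 e12 e23 /and5P[e34 e40 _ _ _].
apply: chromatic_number_lb => [|k /existsP[f /forallP proper]].
  by rewrite cardsE (card_uniqP uniq_s).
have f_neq x y : x \in s -> y \in s -> e x y -> val (f x) != val (f y).
  move=> xs ys exy; have := proper x; rewrite inE xs => /forallP/(_ y).
  by rewrite inE ys exy val_eqE.
rewrite leqNgt; apply/negP => k_lt3.
have lt2 x : val (f x) < 2 by rewrite (leq_trans (ltn_ord (f x))).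
move: (pentagon_not_2colourable (lt2 v0) (lt2 v1) (lt2 v2) (lt2 v3) (lt2 v4)).
by rewrite !f_neq // !inE eqxx ?orbT.
Qed.

Lemma pentagon_clique : clique_number e S <= 2.
Proof.
case/and5P: pentagon => _ _ _ _ /and5P[_ _ n02 n03 /and3P[n13 n14 n24]].
apply: clique_number_ub => K KS /forallP clK.
have adj x y : x \in K -> y \in K -> x != y -> e x y.
  move=> xK yK; have := clK x; rewrite xK => /forallP/(_ y).
  by rewrite yK /= => /implyP.
have sep x y : ~~ e x y -> x != y -> ~~ ((x \in K) && (y \in K)).
  by move=> nexy xy; apply/negP => /andP[xK yK]; rewrite adj in nexy.
have [d02 d03 d13 d14 d24] :
    [/\ v0 != v2, v0 != v3, v1 != v3, v1 != v4 & v2 != v4].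
  move: uniq_s; rewrite /= !inE !negb_or andbT.
  by case/and4P=> /and4P[_ -> -> _] /and3P[_ -> ->] /andP[_ ->].
have card_K : #|K| <= size [seq x <- s | x \in K].
  apply: leq_trans (card_size _); apply: subset_leq_card.
  apply/subsetP => x xK; rewrite mem_filter xK /=.
  by have := subsetP KS x xK; rewrite inE.
apply: leq_trans card_K _.
move: (sep _ _ n02 d02) (sep _ _ n03 d03) (sep _ _ n13 d13) (sep _ _ n14 d14).
move: (sep _ _ n24 d24); rewrite /=.
by case: (v0 \in K); case: (v1 \in K); case: (v2 \in K); case: (v3 \in K);
   case: (v4 \in K).
Qed.

Lemma pentagon_not_perfect : ~ perfect e.
Proof.
move=> perf; have := pentagon_chromatic; rewrite perf => /leq_trans.
by move/(_ _ pentagon_clique).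
Qed.
End InducedPentagon.

Section EnhancedPowerGraph.
Variable gT : finGroupType.
Implicit Types x y u v g : gT.
Local Open Scope group_scope.

Lemma cyclic_join_in_cycle x y g :
  x \in <[g]> -> y \in <[g]> -> cyclic <<[set x; y]>>.
Proof.
move=> xg yg; apply: cyclicS (cycle_cyclic g).
by rewrite gen_subG subUset !sub1set xg yg.
Qed.

Lemma ep_adj_in_cycle x y g :
  x != y -> x \in <[g]> -> y \in <[g]> -> ep_adj x y.
Proof. by move=> xy xg yg; rewrite /ep_adj xy (cyclic_join_in_cycle xg yg). Qed.

(* Subgroups of cyclic groups are cyclic, so a group containing a
   non-cyclic pair is itself not cyclic. *)
Lemma noncyclic_join_sup x y u v :
  u \in <<[set x; y]>> -> v \in <<[set x; y]>> ->
  ~~ cyclic <<[set u; v]>> -> ~~ cyclic <<[set x; y]>>.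
Proof.
move=> uxy vxy; apply: contra; apply: cyclicS.
by rewrite gen_subG subUset !sub1set uxy vxy.
Qed.

Lemma noncyclic_nonadj x y : ~~ cyclic <<[set x; y]>> -> ~~ ep_adj x y.
Proof. by move=> ncxy; rewrite /ep_adj negb_and ncxy orbT. Qed.

Lemma mem_join_cyclel u x y : u \in <[x]> -> u \in <<[set x; y]>>.
Proof.
by apply/subsetP; rewrite cycle_subG mem_gen // !inE eqxx.
Qed.

Lemma mem_join_cycler u x y : u \in <[y]> -> u \in <<[set x; y]>>.
Proof. by rewrite setUC; apply: mem_join_cyclel. Qed.

Lemma mem_cycle_mull x y :
  commute x y -> coprime #[x] #[y] -> x \in <[x * y]>.
Proof. by move=> cxy co_xy; rewrite -cycle_subG cycleMsub. Qed.

Lemma mem_cycle_mulr x y :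
  commute x y -> coprime #[x] #[y] -> y \in <[x * y]>.
Proof.
by move=> cxy co_xy; rewrite cxy mem_cycle_mull // coprime_sym.
Qed.

(* In a cyclic group there is one subgroup of each order, so two elements
   of the same order generate a non-cyclic group unless y is a power of x. *)
Lemma noncyclic_same_order x y :
  #[x] = #[y] -> y \notin <[x]> -> ~~ cyclic <<[set x; y]>>.
Proof.
move=> oxy; apply: contra => cyc_xy.
have sx : <[x]> \subset <<[set x; y]>>.
  by rewrite cycle_subG mem_join_cyclel ?cycle_id.
have sy : <[y]> \subset <<[set x; y]>>.
  by rewrite cycle_subG mem_join_cycler ?cycle_id.
have /eqP -> : <[x]> :==: <[y]>.
  by rewrite (eq_subG_cyclic cyc_xy sx sy) -!orderE oxy.
exact: cycle_id.
Qed.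

(* Membership in <[x]> is decided by the first #[x] powers of x. *)
Lemma notin_cycle x y : (forall i, i < #[x] -> y != x ^+ i)%N -> y \notin <[x]>.
Proof.
move=> ypow; apply/cycleP => -[i yxi].
have /eqP[] := ypow _ (ltn_pmod i (order_gt0 x)).
by rewrite expg_mod_order.
Qed.

End EnhancedPowerGraph.

Section AbelianPentagon.
Variable gT : finGroupType.
Hypothesis gT_comm : forall x y : gT, commute x y.
Implicit Types x y z : gT.
Local Open Scope group_scope.

Lemma mem_cycle_mul3 x y z :
  coprime #[x] #[y] -> coprime #[x] #[z] -> coprime #[y] #[z] ->
  [/\ x \in <[x * y * z]>, y \in <[x * y * z]> & z \in <[x * y * z]>].
Proof.
move=> co_xy co_xz co_yz.
have co_xy_z : coprime #[x * y] #[z] by rewrite orderM // coprimeMl co_xz.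
have /subsetP sub_xy : <[x * y]> \subset <[x * y * z]>.
  by rewrite cycle_subG mem_cycle_mull.
split; last exact: mem_cycle_mulr.
  by rewrite sub_xy ?mem_cycle_mull.
by rewrite sub_xy ?mem_cycle_mulr.
Qed.

Variables a1 a2 b1 b2 c1 c2 : gT.
Hypotheses (oa1 : #[a1] = 2) (oa2 : #[a2] = 2) (ob1 : #[b1] = 3)
           (ob2 : #[b2] = 3) (oc1 : #[c1] = 5) (oc2 : #[c2] = 5).
Hypotheses (ncA : ~~ cyclic <<[set a1; a2]>>) (ncB : ~~ cyclic <<[set b1; b2]>>)
           (ncC : ~~ cyclic <<[set c1; c2]>>).

(* The orders of the five vertices are 6, 15, 2, 3 and 10, so they are distinct. *)
Lemma pentagon_vertices_uniq : uniq [:: a1 * b1; b1 * c2; a2; b2; a1 * c1].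
Proof.
apply: (@map_uniq _ _ order).
by rewrite /= !orderM ?oa1 ?oa2 ?ob1 ?ob2 ?oc1 ?oc2.
Qed.

(* Consecutive vertices lie in a common cyclic subgroup, generated by
   a1b1c2, a2b1c2, a2b2, a1b2c1 and a1b1c1 respectively. *)
Lemma pentagon_edges :
  [/\ ep_adj (a1 * b1) (b1 * c2), ep_adj (b1 * c2) a2, ep_adj a2 b2,
      ep_adj b2 (a1 * c1) & ep_adj (a1 * c1) (a1 * b1)].
Proof.
have := pentagon_vertices_uniq; rewrite /= !inE !negb_or.
case/and4P=> /and4P[d01 _ _ d04] /and3P[d12 _ _] /andP[d23 _] /andP[d34 _].
have := @mem_cycle_mul3 a1 b1 c2; rewrite oa1 ob1 oc2.
case/(_ isT isT isT)=> a1g1 b1g1 c2g1.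
have := @mem_cycle_mul3 a2 b1 c2; rewrite oa2 ob1 oc2.
case/(_ isT isT isT)=> a2g2 b1g2 c2g2.
have := @mem_cycle_mul3 a1 b2 c1; rewrite oa1 ob2 oc1.
case/(_ isT isT isT)=> a1g4 b2g4 c1g4.
have := @mem_cycle_mul3 a1 b1 c1; rewrite oa1 ob1 oc1.
case/(_ isT isT isT)=> a1g5 b1g5 c1g5.
have co_a2b2 : coprime #[a2] #[b2] by rewrite oa2 ob2.
split.
- exact: ep_adj_in_cycle d01 (groupM a1g1 b1g1) (groupM b1g1 c2g1).
- exact: ep_adj_in_cycle d12 (groupM b1g2 c2g2) a2g2.
- exact: ep_adj_in_cycle d23 (mem_cycle_mull (gT_comm _ _) co_a2b2)
    (mem_cycle_mulr (gT_comm _ _) co_a2b2).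
- exact: ep_adj_in_cycle d34 b2g4 (groupM a1g4 c1g4).
- by apply: ep_adj_in_cycle (groupM a1g5 c1g5) (groupM a1g5 b1g5); rewrite eq_sym.
Qed.

(* Each non-consecutive pair generates a group containing {a1,a2},
   {b1,b2} or {c1,c2}: the needed factor is a power of the vertex. *)
Lemma pentagon_nonedges :
  [/\ ~~ cyclic <<[set a1 * b1; a2]>>, ~~ cyclic <<[set a1 * b1; b2]>>,
      ~~ cyclic <<[set b1 * c2; b2]>>, ~~ cyclic <<[set b1 * c2; a1 * c1]>>
    & ~~ cyclic <<[set a2; a1 * c1]>>].
Proof.
have in_mull x y : coprime #[x] #[y] -> x \in <[x * y]>.
  exact: mem_cycle_mull (gT_comm x y).
have in_mulr x y : coprime #[x] #[y] -> y \in <[x * y]>.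
  exact: mem_cycle_mulr (gT_comm x y).
have a1_a1b1 : a1 \in <[a1 * b1]> by rewrite in_mull ?oa1 ?ob1.
have b1_a1b1 : b1 \in <[a1 * b1]> by rewrite in_mulr ?oa1 ?ob1.
have b1_b1c2 : b1 \in <[b1 * c2]> by rewrite in_mull ?ob1 ?oc2.
have c2_b1c2 : c2 \in <[b1 * c2]> by rewrite in_mulr ?ob1 ?oc2.
have a1_a1c1 : a1 \in <[a1 * c1]> by rewrite in_mull ?oa1 ?oc1.
have c1_a1c1 : c1 \in <[a1 * c1]> by rewrite in_mulr ?oa1 ?oc1.
split.
- exact: noncyclic_join_sup (mem_join_cyclel _ a1_a1b1)
    (mem_join_cycler _ (cycle_id _)) ncA.
- exact: noncyclic_join_sup (mem_join_cyclel _ b1_a1b1)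
    (mem_join_cycler _ (cycle_id _)) ncB.
- exact: noncyclic_join_sup (mem_join_cyclel _ b1_b1c2)
    (mem_join_cycler _ (cycle_id _)) ncB.
- exact: noncyclic_join_sup (mem_join_cycler _ c1_a1c1)
    (mem_join_cyclel _ c2_b1c2) ncC.
- exact: noncyclic_join_sup (mem_join_cycler _ a1_a1c1)
    (mem_join_cyclel _ (cycle_id _)) ncA.
Qed.

Lemma abelian_pentagon :
  induces_C5 (@ep_adj gT) (a1 * b1) (b1 * c2) a2 b2 (a1 * c1).
Proof.
have [e01 e12 e23 e34 e40] := pentagon_edges.
have [n02 n03 n13 n14 n24] := pentagon_nonedges.
rewrite /induces_C5 pentagon_vertices_uniq e01 e12 e23 e34 e40.
by rewrite !noncyclic_nonadj.
Qed.

End AbelianPentagon.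

Section C30xC30Pentagon.
Local Open Scope group_scope.

Lemma C30xC30_commute (x y : C30xC30) : commute x y.
Proof.
by case: x y => [x1 x2] [y1 y2]; rewrite /commute; congr (_, _); apply: Zp_mulgC.
Qed.

Definition axis1 (k : nat) : C30xC30 := (inZp k, inZp 0).
Definition axis2 (k : nat) : C30xC30 := (inZp 0, inZp k).

Lemma C30xC30_pentagon :
  induces_C5 (@ep_adj C30xC30) (axis1 15 * axis1 10) (axis1 10 * axis2 6)
    (axis2 15) (axis2 10) (axis1 15 * axis1 6).
Proof.
have prime_order p (x : C30xC30) : prime p -> x ^+ p == 1 -> x != 1 -> #[x] = p.
  by move=> p_pr /eqP; apply: nt_prime_order.
have o2a : #[axis1 15] = 2 by apply: prime_order.
have o2b : #[axis2 15] = 2 by apply: prime_order.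
have o3a : #[axis1 10] = 3 by apply: prime_order.
have o3b : #[axis2 10] = 3 by apply: prime_order.
have o5a : #[axis1 6] = 5 by apply: prime_order.
have o5b : #[axis2 6] = 5 by apply: prime_order.
apply: abelian_pentagon => //; first exact: C30xC30_commute.
- apply: noncyclic_same_order; first by rewrite o2a o2b.
  by apply: notin_cycle; rewrite o2a; case=> [|[|]].
- apply: noncyclic_same_order; first by rewrite o3a o3b.
  by apply: notin_cycle; rewrite o3a; case=> [|[|[|]]].
- apply: noncyclic_same_order; first by rewrite o5a o5b.
  by apply: notin_cycle; rewrite o5a; case=> [|[|[|[|[|]]]]].
Qed.

End C30xC30Pentagon.

Theorem mainTheorem7 :
  ~ perfect (@ep_adj C30xC30) /\
  forall a1 a2 b1 b2 c1 c2 : C30xC30,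
    #[a1]%g = 2 -> #[a2]%g = 2 -> #[b1]%g = 3 -> #[b2]%g = 3 ->
    #[c1]%g = 5 -> #[c2]%g = 5 ->
    ~~ cyclic <<[set a1; a2]>>%g -> ~~ cyclic <<[set b1; b2]>>%g ->
    ~~ cyclic <<[set c1; c2]>>%g ->
    induces_C5 (@ep_adj C30xC30)
      (a1 * b1)%g (b1 * c2)%g a2 b2 (a1 * c1)%g.
Proof.
split; last exact: abelian_pentagon C30xC30_commute.
exact: pentagon_not_perfect C30xC30_pentagon.
Qed.
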